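(* Let $S_1$ and $S_2$ be two XML Schemas, let $u\ge 0$ be the severity level, let $m$ be the maximum of the numbers of complex elements of $S_1$ and of $S_2$, and let $q$ be the maximum cardinality of a neighborhood $neighborhood(x,v)$, $0\le v\le u$, of an x-component $x$ of $S_1$ or $S_2$. Assuming the neighborhoods are available and each thesaurus lookup takes constant time, the values $synonymous(E_1,E_2,u)$ for all pairs of complex elements $E_1$ of $S_1$ and $E_2$ of $S_2$ (i.e. all synonymies at severity level $u$ between $S_1$ and $S_2$) can be computed in worst-case time $O((u+1)\, q^3\, m^2)$.
   Context: An x-component of an XML Schema $S$ is an element or an attribute declared in $S$; $XCompSet(S)$ is the set of x-components. A complex element is an element declared with a complex type; a simple element is one of simple type. For x-components $x_S,x_T$ of the same schema: $veryclose(x_S,x_T)$ iff $x_T=x_S$, or $x_T$ is an attribute of $x_S$, or $x_T$ is a simple sub-element of $x_S$; $close(x_S,x_T)$ iff $x_T$ is a complex sub-element of $x_S$, or $x_T$ is an element and $x_S$ has an IDREF/IDREFS attribute referring to $x_T$; $near$ is the disjunction of the two. The connection cost $CC(x_S,x_T)$ is $0$ if veryclose, $1$ if close and not veryclose, otherwise the minimum over directed paths of distinct x-components joined by $near$ pairs of the sum of pair costs ($0$ for veryclose pairs, $1$ for close pairs), and $\infty$ if no path exists. $neighborhood(x_S,j)=\{x_T\in XCompSet(S): CC(x_S,x_T)\le j\}$. Fix a thesaurus (a symmetric synonymy relation on names). For x-components $x_1$ of $S_1$, $x_2$ of $S_2$ and level $v$, $BG(v)$ is the bipartite graph with node sets $P(v)$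 (the x-components of $neighborhood(x_1,v)$) and $Q(v)$ (those of $neighborhood(x_2,v)$), with an edge between $p$ and $q$ iff their names are synonymous in the thesaurus; $A'(v)$ is a maximum matching and $\phi_{BG}(v)=\frac{2|A'(v)|}{|P(v)|+|Q(v)|}$. The neighborhoods at level $v$ are similar iff $\phi_{BG}(v)>1/2$, and $synonymous(x_1,x_2,u)$ is true iff they are similar at every level $v=0,\dots,u$. *)

From HB Require Import structures.
From mathcomp Require Import all_boot all_order all_algebra.
Set Implicit Arguments. Unset Strict Implicit. Unset Printing Implicit Defensive.
Import Order.TTheory GRing.Theory Num.Theory.

(* [xcomp] = XCompSet(S), the (finite) set of x-components of S.
   [is_elem x]   : x is an element (otherwise x is an attribute);
   [is_cplx x]   : x is declared with a complex type;
   [attr_of x y] : y is an attribute of x;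
   [sub_of x y]  : y is a sub-element of x;
   [idref x y]   : x has an IDREF/IDREFS attribute referring to y. *)
Record schema (Name : Type) := Schema {
  xcomp : finType;
  cname : xcomp -> Name;
  is_elem : pred xcomp;
  is_cplx : pred xcomp;
  attr_of : rel xcomp;
  sub_of : rel xcomp;
  idref : rel xcomp
}.

Section SchemaDefs.
Variables (Name : Type) (S : schema Name).
Local Notation X := (xcomp S).

Definition complex_elem (x : X) : bool := is_elem x && is_cplx x.
Definition simple_elem (x : X) : bool := is_elem x && ~~ is_cplx x.

Definition veryclose (xS xT : X) : bool :=
  [|| xT == xS, attr_of xS xT | sub_of xS xT && simple_elem xT].

Definition close (xS xT : X) : bool :=
  (sub_of xS xT && complex_elem xT) || (is_elem xT && idref xS xT).

Definition near (xS xT : X) : bool := veryclose xS xT || close xS xT.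

Definition pair_cost (a b : X) : nat := if veryclose a b then 0 else 1.

(* A directed path of distinct x-components  x = t_0, t_1, ..., t_k = y
   joined by near pairs is represented by the sequence [t_1; ...; t_k]. *)
Definition is_cpath (x : X) (s : seq X) (y : X) : bool :=
  [&& path near x s, uniq (x :: s) & last x s == y].

Definition path_cost (x : X) (s : seq X) : nat := sumn (pairmap pair_cost x s).

(* [CC_le x y j]  <=>  CC(x,y) <= j  (CC possibly infinite).
   In the "otherwise" case CC is the minimum of [path_cost] over the finitely
   many paths of distinct x-components (such a path has at most #|X|
   components, hence its tail has size < #|X|.+1); the minimum is <= j iff
   some path has cost <= j, and CC = infinity (never <= j) if there is none. *)
Definition CC_le (x y : X) (j : nat) : bool :=
  if veryclose x y then true
  else if close x y then 1 <= j
  else [exists n : 'I_#|X|.+1, [exists t : n.-tuple X,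
          is_cpath x t y && (path_cost x t <= j)]].

Definition neighborhood (x : X) (j : nat) : {set X} := [set y | CC_le x y j].

End SchemaDefs.

Section Synonymy.
Variables (Name : Type) (thes : rel Name) (S1 S2 : schema Name).
Local Notation X1 := (xcomp S1).
Local Notation X2 := (xcomp S2).

Definition is_matching (P : {set X1}) (Q : {set X2}) (M : {set X1 * X2}) : bool :=
  [forall e in M, [&& e.1 \in P, e.2 \in Q & thes (cname e.1) (cname e.2)]]
  && [forall e in M, forall e' in M, (e.1 == e'.1) || (e.2 == e'.2) ==> (e == e')].

Definition max_matching_size (P : {set X1}) (Q : {set X2}) : nat :=
  \max_(M : {set X1 * X2} | is_matching P Q M) #|M|.

Definition phiBG (x1 : X1) (x2 : X2) (v : nat) : rat :=
  let P := neighborhood x1 v in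
  let Q := neighborhood x2 v in
  ((2 * max_matching_size P Q)%:R / (#|P| + #|Q|)%:R)%R.

Definition similar_at (x1 : X1) (x2 : X2) (v : nat) : bool :=
  (2%:R^-1 < phiBG x1 x2 v)%R.

Definition synonymous (x1 : X1) (x2 : X2) (u : nat) : bool :=
  [forall v : 'I_u.+1, similar_at x1 x2 v].

Definition m_param : nat :=
  maxn #|[set x : X1 | complex_elem x]| #|[set x : X2 | complex_elem x]|.

Definition q_param (u : nat) : nat :=
  maxn (\max_(x : X1) \max_(v < u.+1) #|neighborhood x v|)
       (\max_(x : X2) \max_(v < u.+1) #|neighborhood x v|).

End Synonymy.

(* Cost model: a computation returns its value together with the number of  *)
(* elementary steps it performed.  Unit-cost steps (RAM model): a loop       *)
(* iteration / function call, a comparison, an array read or write, and a    *)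
(* thesaurus lookup (assumed constant time, as in the paper).  Allocating or *)
(* scanning an array of size n costs n.                                      *)
Definition Cost (A : Type) : Type := (A * nat)%type.
Definition retC {A} (a : A) : Cost A := (a, 0).
Definition bindC {A B} (m : Cost A) (f : A -> Cost B) : Cost B :=
  let: (a, n) := m in let: (b, k) := f a in (b, n + k).
Definition ticks (n : nat) : Cost unit := (tt, n).
Definition tick : Cost unit := ticks 1.

Notation "'DO' x <- m ; f" := (bindC m (fun x => f))
  (at level 200, x name, m at level 100, f at level 200).

(* The algorithm: for each pair of complex elements and each level v <= u,  *)
(* build BG(v) from the given neighborhoods and compute a maximum matching   *)
(* by the augmenting-path (Kuhn / Hungarian) method.                         *)
Section Algorithm.
Variables (Name X1 X2 : Type) (thes : rel Name) (nm1 : X1 -> Name) (nm2 : X2 -> Name).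

Section Kuhn.
Variables (pl : seq X1) (ql : seq X2).
Let nP := size pl.
Let nQ := size ql.

Definition edgeC (i j : nat) : Cost bool :=
  DO _ <- tick ;
  retC (match onth pl i, onth ql j with
        | Some a, Some b => thes (nm1 a) (nm2 b)
        | _, _ => false end).

(* try to find an augmenting path from left node i;
   vis : visited right nodes, mt : right node -> matched left node *)
Fixpoint tryC (k i : nat) (vis : seq bool) (mt : seq (option nat))
    : Cost (bool * seq bool * seq (option nat)) :=
  match k with
  | 0 => DO _ <- tick ; retC (false, vis, mt)
  | k'.+1 =>
    let fix scan (r : nat) (vis : seq bool) (mt : seq (option nat))
        : Cost (bool * seq bool * seq (option nat)) :=
      match r with
      | 0 => DO _ <- tick ; retC (false, vis, mt)
      | r'.+1 =>
        let j := nQ - r in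
        DO _ <- tick ;
        DO e <- edgeC i j ;
        if e && ~~ nth true vis j then
          let vis' := set_nth false vis j true in
          match nth None mt j with
          | None => retC (true, vis', set_nth None mt j (Some i))
          | Some i' =>
            DO res <- tryC k' i' vis' mt ;
            let: (b, vis'', mt'') := res in
            if b then retC (true, vis'', set_nth None mt'' j (Some i))
            else scan r' vis'' mt''
          end
        else scan r' vis mt
      end
    in DO _ <- tick ; scan nQ vis mt
  end.

Fixpoint kuhn_loop (r : nat) (mt : seq (option nat)) : Cost (seq (option nat)) :=
  match r with
  | 0 => retC mt
  | r'.+1 =>
    let i := nP - r in
    DO _ <- tick ;
    DO _ <- ticks nQ ;                      (* fresh visited array *)
    DO res <- tryC nQ.+1 i (nseq nQ false) mt ;
    kuhn_loop r' res.2
  end.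

Definition kuhnC : Cost nat :=
  DO _ <- ticks nQ ;                        (* fresh matching array *)
  DO mt <- kuhn_loop nP (nseq nQ None) ;
  DO _ <- ticks nQ ;                        (* count matched right nodes *)
  retC (count (fun o : option nat => o) mt).

(* phi_BG > 1/2  <=>  |P| + |Q| < 4 |A'| *)
Definition similarC : Cost bool :=
  DO mm <- kuhnC ;
  DO _ <- tick ;
  retC (nP + nQ < 4 * mm).

End Kuhn.

Variables (u : nat) (nb1 : X1 -> nat -> seq X1) (nb2 : X2 -> nat -> seq X2).

Fixpoint levelsC (E1 : X1) (E2 : X2) (r : nat) : Cost bool :=
  match r with
  | 0 => retC true
  | r'.+1 =>
    let v := u.+1 - r in
    DO _ <- tick ;
    DO b <- similarC (nb1 E1 v) (nb2 E2 v) ;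
    DO b' <- levelsC E1 E2 r' ;
    retC (b && b')
  end.

Definition synonymousC (E1 : X1) (E2 : X2) : Cost bool := levelsC E1 E2 u.+1.

Fixpoint mapC {A B} (f : A -> Cost B) (s : seq A) : Cost (seq B) :=
  match s with
  | [::] => retC [::]
  | x :: s' => DO _ <- tick ; DO y <- f x ; DO ys <- mapC f s' ; retC (y :: ys)
  end.

Definition all_synonymiesC (cl1 : seq X1) (cl2 : seq X2)
    : Cost (seq (seq ((X1 * X2) * bool))) :=
  mapC (fun E1 => mapC (fun E2 => DO b <- synonymousC E1 E2 ; retC ((E1, E2), b)) cl2) cl1.

End Algorithm.

From HB Require Import structures.
From mathcomp Require Import all_boot all_order all_algebra zify.
Set Implicit Arguments. Unset Strict Implicit. Unset Printing Implicit Defensive.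
Import GRing.Theory Num.Theory.

(* A search from a left node that finds no
   augmenting path visits a Hungarian tree; replacing, in a vertex cover of the
   edges seen so far, the partners of its right nodes by the right nodes
   themselves gives a cover that also handles the new left node, without growing
   it.  So at the end the matching is as large as a vertex cover, hence maximum
   (Koenig), and phi_BG(v) > 1/2 is decided exactly by |P| + |Q| < 4 |A'(v)|.
   For the cost, a search visits each right node at most once and every visit
   pays for one scan of the right side, so a search costs O(q^2) and a level
   O(q^3); there are u + 1 levels and at most m^2 pairs. *)

Lemma nth_set_nth_ltn (T : Type) (x0 x1 : T) (s : seq T) j y i :
  j < size s -> nth x0 (set_nth x1 s j y) i = if i == j then y else nth x0 s i.
Proof. by elim: s j i => [|x s IH] [|j] [|i] //= hj; rewrite IH. Qed.

Lemma onth_index (T : eqType) (s : seq T) a : a \in s -> onth s (index a s) = Some a.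
Proof. by elim: s => //= x s IH; rewrite inE eq_sym; case: eqP => [->|_ /IH]. Qed.

Lemma nth_count_le1_inj (T : eqType) (x0 y : T) (s : seq T) j1 j2 :
  count (pred1 y) s <= 1 -> j1 < size s -> j2 < size s ->
  nth x0 s j1 = y -> nth x0 s j2 = y -> j1 = j2.
Proof.
elim: s j1 j2 => [|x s IH] [|j1] [|j2] //= hc h1 h2 e1 e2.
- have : y \in s by rewrite -e2 mem_nth.
  by rewrite -has_pred1 has_count; move: hc; rewrite e1 eqxx /=; lia.
- have : y \in s by rewrite -e1 mem_nth.
  by rewrite -has_pred1 has_count; move: hc; rewrite e2 eqxx /=; lia.
- by congr S; apply: IH => //; move: hc; case: (x == y) => /=; lia.
Qed.

Lemma nth_Some_mem (T : eqType) (s : seq (option T)) j x :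
  nth None s j = Some x -> j < size s /\ Some x \in s.
Proof.
move=> e; have hj : j < size s.
  by rewrite ltnNge; apply/negP => /(nth_default None); rewrite e.
by split=> //; rewrite -e mem_nth.
Qed.

Lemma count_Some_add_None (s : seq (option nat)) :
  count (fun o : option nat => o) s + count (pred1 None) s = size s.
Proof. by elim: s => //= [[x|] s <-] /=; lia. Qed.

Lemma map_index_uniq (T : eqType) (s : seq T) : uniq s -> map (index^~ s) s = iota 0 (size s).
Proof.
case: s => // x0 s us; apply: (@eq_from_nth _ 0); rewrite size_map ?size_iota // => i hi.
by rewrite (nth_map x0) // index_uniq // nth_iota.
Qed.

Lemma card_set_mem_filter (T : finType) (s : seq T) (p : pred T) :
  uniq s -> #|[set x | (x \in s) && p x]| = count p s.
Proof.
move=> us; rewrite -size_filter -(card_uniqP _); last exact: filter_uniq.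
by apply: eq_card => x; rewrite inE mem_filter andbC.
Qed.

Lemma mapC_val (A B : Type) (f : A -> Cost B) s : (mapC f s).1 = map (fun x => (f x).1) s.
Proof. by elim: s => //= x s <-; case: (mapC f s) => ys k; case: (f x). Qed.

Lemma mapC_cost (A B : Type) (f : A -> Cost B) s :
  (mapC f s).2 = sumn (map (fun x => 1 + (f x).2) s).
Proof. by elim: s => //= x s <-; case: (mapC f s) => ys k; case: (f x) => y n /=; lia. Qed.

Lemma bindC_retC (A B : Type) (m : Cost A) (f : A -> B) :
  (DO a <- m; retC (f a)) = (f m.1, m.2 + 0).
Proof. by case: m. Qed.

Lemma sumn_map_le (T : eqType) (f : T -> nat) s K :
  (forall x, x \in s -> f x <= K) -> sumn (map f s) <= size s * K.
Proof.
elim: s => //= x s IH h; rewrite mulSn leq_add ?h ?mem_head //.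
by apply: IH => y hy; apply: h; rewrite inE hy orbT.
Qed.

Section AugmentingPath.
Variables (Name X1 X2 : Type) (thes : rel Name) (nm1 : X1 -> Name) (nm2 : X2 -> Name)
  (pl : seq X1) (ql : seq X2).
Local Notation nQ := (size ql).
Local Notation tryC := (tryC thes nm1 nm2 pl ql).

(* The algorithm addresses BG(v) by positions: left node [i] is the [i]-th item of
   [pl], right node [j] the [j]-th item of [ql]. *)
Definition bg_edge (i j : nat) : bool :=
  match onth pl i, onth ql j with
  | Some a, Some b => thes (nm1 a) (nm2 b)
  | _, _ => false
  end.

Lemma bg_edge_ltn i j : bg_edge i j -> i < size pl /\ j < nQ.
Proof.
rewrite /bg_edge; case E1: (onth pl i) => [a|] //; case E2: (onth ql j) => [b|] // _.
by split; rewrite -onthTE ?E1 ?E2.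
Qed.

(* success flag, visited right nodes, and the matching as a map from right
   nodes to their matched left node *)
Definition dfs_state := (bool * seq bool * seq (option nat))%type.

(* The inner loop of [tryC] as a top-level function of the recursive call, so
   that [tryC_S] can unfold [tryC] onto it. *)
Section Scan.
Variables (rec : nat -> seq bool -> seq (option nat) -> Cost dfs_state) (i : nat).

Fixpoint scanC (r : nat) (vis : seq bool) (mt : seq (option nat)) : Cost dfs_state :=
  match r with
  | 0 => DO _ <- tick; retC (false, vis, mt)
  | r'.+1 =>
      let j := nQ - r in
      DO _ <- tick;
      DO e <- edgeC thes nm1 nm2 pl ql i j;
      if e && ~~ nth true vis j then
        let vis' := set_nth false vis j true in
        match nth None mt j with
        | Some i' =>
            DO res <- rec i' vis' mt;
            match res with
            | (true, vis'', mt'') => retC (true, vis'', set_nth None mt'' j (Some i))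
            | (false, vis'', mt'') => scanC r' vis'' mt''
            end
        | None => retC (true, vis', set_nth None mt j (Some i))
        end
      else scanC r' vis mt
  end.

End Scan.

Lemma tryC_S k i vis mt :
  tryC k.+1 i vis mt = let: (s, n) := scanC (tryC k) i nQ vis mt in (s, 1 + n).
Proof. by []. Qed.

Lemma scanC_S rec i r vis mt : scanC rec i r.+1 vis mt =
  let j := nQ - r.+1 in
  if bg_edge i j && ~~ nth true vis j then
    match nth None mt j with
    | Some i' =>
        let: (s, n) := rec i' (set_nth false vis j true) mt in
        let: (b, vis', mt') := s in
        if b then ((true, vis', set_nth None mt' j (Some i)), 1 + (1 + (n + 0)))
        else let: (s', n') := scanC rec i r vis' mt' in (s', 1 + (1 + (n + n')))
    | None => ((true, set_nth false vis j true, set_nth None mt j (Some i)), 1 + (1 + 0))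
    end
  else let: (s', n') := scanC rec i r vis mt in (s', 1 + (1 + n')).
Proof.
rewrite [LHS]/= -/(bg_edge i (nQ - r.+1)); cbv zeta.
case: (bg_edge i _ && _) => /=; last by case: (scanC _ _ _ _ _).
case: (nth None mt _) => [i'|] //=.
by case: (rec _ _ _) => [[[[] vis'] mt'] n] //=; case: (scanC _ _ _ _ _).
Qed.

Definition nvisited (vis : seq bool) : nat := count id vis.

Definition vis_extends (vis vis' : seq bool) : Prop :=
  [/\ size vis' = size vis, forall j, nth true vis j -> nth true vis' j
    & nvisited vis <= nvisited vis'].

Lemma vis_extends_trans v1 v2 v3 : vis_extends v1 v2 -> vis_extends v2 v3 -> vis_extends v1 v3.
Proof.
case=> s1 m1 c1 [s2 m2 c2]; split; [by rewrite s2 | by move=> j /m1 /m2 | exact: leq_trans c2].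
Qed.

Section MarkVisited.
Variables (vis : seq bool) (j : nat).
Hypotheses (hj : j < size vis) (unvis : nth true vis j = false).
Local Notation vis1 := (set_nth false vis j true).

Lemma size_mark : size vis1 = size vis.
Proof. by rewrite size_set_nth; apply/maxn_idPr. Qed.

Lemma nth_mark m : nth true vis1 m = (m == j) || nth true vis m.
Proof. by rewrite nth_set_nth_ltn //; case: eqP. Qed.

Lemma nvisited_mark : nvisited vis1 = (nvisited vis).+1.
Proof. by rewrite /nvisited count_set_nth_ltn // (set_nth_default true) // unvis /=; lia. Qed.

Lemma vis_extends_mark : vis_extends vis vis1.
Proof.
by split; [exact: size_mark | move=> m hm; rewrite nth_mark hm orbT | rewrite nvisited_mark].
Qed.

End MarkVisited.

(* [mt'] arises from [mt] by augmenting along an alternating path from the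
   free left node [i] that avoids the right nodes already visited in [vis]. *)
Definition augments i (vis : seq bool) (mt mt' : seq (option nat)) : Prop :=
  [/\ size mt' = size mt,
      forall x, count (pred1 (Some x)) mt' = count (pred1 (Some x)) mt + (x == i),
      (count (pred1 None) mt').+1 = count (pred1 None) mt,
      forall j x, nth None mt' j = Some x -> nth None mt j = Some x \/ bg_edge x j
    & forall j, nth true vis j -> nth None mt' j = nth None mt j].

(* A failed search from [i] leaves every neighbour [j >= lo] of [i] visited, and
   each right node it visited matched to a left node all of whose neighbours are
   visited: the visited nodes and their partners form a Hungarian tree. *)
Definition blocked lo i (vis : seq bool) (mt : seq (option nat)) (vis' : seq bool) : Prop :=
  (forall j, lo <= j -> bg_edge i j -> nth true vis' j) /\
  (forall j, nth true vis' j -> ~~ nth true vis j ->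
     exists2 i', nth None mt j = Some i' & forall j', bg_edge i' j' -> nth true vis' j').

Lemma augments_free i vis mt j :
  j < size mt -> nth None mt j = None -> bg_edge i j -> nth true vis j = false ->
  augments i vis mt (set_nth None mt j (Some i)).
Proof.
move=> hj mj eij vj; split.
- by rewrite size_set_nth; apply/maxn_idPr.
- by move=> x; rewrite count_set_nth_ltn // mj subn0 eq_sym.
- rewrite count_set_nth_ltn // mj /= addn0 subn1 prednK // -has_count.
  by apply/hasP; exists None => //; rewrite -mj mem_nth.
- by move=> j0 x; rewrite nth_set_nth_ltn //; case: eqP => [-> [<-]|_ ->]; auto.
- by move=> j0 hj0; rewrite nth_set_nth_ltn //; case: eqP => // e0; move: hj0; rewrite e0 vj.
Qed.

Lemma augments_rematch i i' vis mt mt' j :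
  j < size vis -> j < size mt -> nth None mt j = Some i' -> bg_edge i j ->
  nth true vis j = false -> augments i' (set_nth false vis j true) mt mt' ->
  augments i vis mt (set_nth None mt' j (Some i)).
Proof.
move=> hjv hj mj eij vj [sz cs cn ev uv].
have m'j : nth None mt' j = Some i' by rewrite uv ?nth_mark ?eqxx.
have hj' : j < size mt' by rewrite sz.
split.
- by rewrite size_set_nth sz; apply/maxn_idPr.
- move=> x; have eqS a : pred1 (Some x) (Some a) = (x == a) by rewrite /= eq_sym.
  by rewrite count_set_nth_ltn // m'j cs !eqS; case: (x == i'); case: (x == i); lia.
- by rewrite count_set_nth_ltn // m'j /= addn0 subn0.
- by move=> j0 x; rewrite nth_set_nth_ltn //; case: eqP => [-> [<-]|_ /ev]; auto.
- move=> j0 hj0; rewrite nth_set_nth_ltn //; case: eqP => [e0|_].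
    by move: hj0; rewrite e0 vj.
  by apply: uv; rewrite nth_mark // hj0 orbT.
Qed.

Lemma augments_sub i vis vis' mt mt' :
  (forall j, nth true vis j -> nth true vis' j) -> augments i vis' mt mt' -> augments i vis mt mt'.
Proof. by move=> sub [? ? ? ? uv]; split=> // j /sub /uv. Qed.

Lemma blocked_skip lo i vis mt vis' :
  (bg_edge i lo -> nth true vis' lo) -> blocked lo.+1 i vis mt vis' -> blocked lo i vis mt vis'.
Proof.
move=> hlo [nb cl]; split=> // j; rewrite leq_eqVlt; case: eqP => [<- _|_ /= ltj]; first exact: hlo.
exact: nb.
Qed.

Lemma blocked_descend lo i i' vis mt vis2 vis3 :
  lo < size vis -> nth true vis lo = false -> nth None mt lo = Some i' ->
  vis_extends (set_nth false vis lo true) vis2 -> vis_extends vis2 vis3 ->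
  blocked 0 i' (set_nth false vis lo true) mt vis2 -> blocked lo.+1 i vis2 mt vis3 ->
  blocked lo i vis mt vis3.
Proof.
move=> hlo vlo mlo [_ ext12 _] [_ ext23 _] [nb2 cl2] [nb3 cl3].
have v3lo : nth true vis3 lo by apply/ext23/ext12; rewrite nth_mark ?eqxx.
apply: blocked_skip => [_ //|]; split=> // m v3m nvm.
case v2m: (nth true vis2 m); last by apply: cl3; rewrite ?v2m.
case v1m: (nth true (set_nth false vis lo true) m).
  move: v1m; rewrite nth_mark // (negbTE nvm) orbF => /eqP ->.
  by exists i' => // j' /(nb2 _ (leq0n _)) /ext23.
have [i'' mi'' hi''] := cl2 m v2m (negbT v1m).
by exists i'' => // j' /hi'' /ext23.
Qed.

Local Notation W := (2 * nQ + 2).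

(* The cost bound is amortised: each right node newly visited pays [W] ticks,
   enough for one full scan of the right side.  Fuel [k] suffices because every
   recursive call first marks a new right node. *)
Definition dfs_spec k : Prop := forall i vis mt b vis' mt' c,
  size vis = nQ -> size mt = nQ -> nQ < nvisited vis + k ->
  tryC k i vis mt = ((b, vis', mt'), c) ->
  [/\ vis_extends vis vis', c + W * nvisited vis <= W * (nvisited vis' + 1)
    & if b then augments i vis mt mt' else mt' = mt /\ blocked 0 i vis mt vis'].

Lemma scanC_spec k : dfs_spec k -> forall r i vis mt b vis' mt' c,
  size vis = nQ -> size mt = nQ -> r <= nQ -> nQ < nvisited vis + k.+1 ->
  scanC (tryC k) i r vis mt = ((b, vis', mt'), c) ->
  [/\ vis_extends vis vis', c + W * nvisited vis <= 2 * r + 1 + W * nvisited vis'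
    & if b then augments i vis mt mt' else mt' = mt /\ blocked (nQ - r) i vis mt vis'].
Proof.
move=> dfs_k; elim=> [|r IH] i vis mt b vis' mt' c sv sm hr fuel.
  case=> <- <- <- <-; split; [by split | lia | split=> //].
  by split=> [j|j -> //]; rewrite subn0 => hj /bg_edge_ltn [_]; rewrite ltnNge hj.
rewrite scanC_S; set j := nQ - r.+1; cbv zeta.
have hjv : j < size vis by rewrite sv /j; lia.
have hjm : j < size mt by rewrite sm /j; lia.
have lo_next : nQ - r = j.+1 by rewrite /j; lia.
case: ifP => [/andP [eij /negbTE vj] | skip].
  have ext1 := vis_extends_mark hjv vj.
  have nv1 := nvisited_mark hjv vj.
  case mj: (nth None mt j) => [i'|]; last first.
    case=> <- <- <- <-; split; [exact: ext1 | rewrite nv1; lia |].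
    exact: augments_free.
  case Erec: (tryC k i' _ mt) => [[[b2 vis2] mt2] c2].
  have sv1 : size (set_nth false vis j true) = nQ by rewrite size_mark.
  have fuel1 : nQ < nvisited (set_nth false vis j true) + k by rewrite nv1; lia.
  have [ext2 cost2 res2] := dfs_k _ _ _ _ _ _ _ sv1 sm fuel1 Erec.
  have ext12 := vis_extends_trans ext1 ext2.
  move: cost2; rewrite nv1 => cost2.
  case: b2 res2 {Erec} => [aug2 | [-> blk2]].
    case=> <- <- <- <-; split; [exact: ext12 | lia |].
    exact: augments_rematch aug2.
  case Es: (scanC _ i r vis2 mt) => [[[b3 vis3] mt3] c3] [<- <- <- <-].
  have [sv2 _ nv2] := ext2.
  have sv2' : size vis2 = nQ by rewrite sv2.
  have fuel2 : nQ < nvisited vis2 + k.+1 by move: nv2; rewrite nv1; lia.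
  have [ext3 cost3 res3] := IH _ _ _ _ _ _ _ sv2' sm (ltnW hr) fuel2 Es.
  split; [exact: vis_extends_trans ext3 | lia |].
  case: b3 res3 {Es} => [aug3 | [-> blk3]]; last first.
    by split=> //; apply: (blocked_descend hjv vj mj ext2 ext3 blk2); rewrite -lo_next.
  by case: ext12 => _ sub12 _; apply: augments_sub sub12 aug3.
case Es: (scanC _ i r vis mt) => [[[b3 vis3] mt3] c3] [<- <- <- <-].
have [ext3 cost3 res3] := IH _ _ _ _ _ _ _ sv sm (ltnW hr) fuel Es.
split=> //; first lia.
case: b3 res3 {Es} => // [[-> blk3]]; split=> //.
apply: blocked_skip; last by rewrite -lo_next.
by case: ext3 => _ sub3 _ eij; apply: sub3; move: skip; rewrite eij => /negbFE.
Qed.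

Lemma tryC_spec k : dfs_spec k.
Proof.
elim: k => [|k IHk] i vis mt b vis' mt' c sv sm fuel.
  by move: fuel; rewrite addn0 -sv ltnNge count_size.
rewrite tryC_S; case Es: (scanC _ i nQ vis mt) => [[[b3 vis3] mt3] c3] [<- <- <- <-].
have [ext3 cost3 res3] := scanC_spec IHk sv sm (leqnn _) fuel Es.
by split=> //; [lia | rewrite subnn in res3].
Qed.

End AugmentingPath.

Lemma mem_neighborhood_self (Name : Type) (S : schema Name) (x : xcomp S) v :
  x \in neighborhood x v.
Proof. by rewrite inE /CC_le /veryclose eqxx. Qed.

Lemma half_ltr_ratio (a n : nat) : 0 < a ->
  ((2%:R : rat)^-1 < (2 * n)%:R / a%:R)%R = (a < 4 * n).
Proof.
move=> ha; rewrite ltr_pdivlMr ?ltr0n // mulrC ltr_pdivrMr ?ltr0n // -natrM ltr_nat.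
by rewrite mulnC mulnA.
Qed.

(* Ticks of [similarC] on [p] left and [q] right nodes: [2 q + 1] for the
   matching array, the final count and the comparison, and per left node one
   loop step, a fresh visited array and a search bounded by [tryC_spec]. *)
Definition kuhn_cost p q : nat := 2 * q + 1 + p * (1 + q + (2 * q + 2) * (q + 1)).

Lemma kuhn_cost_le p q r : p <= r -> q <= r -> kuhn_cost p q <= kuhn_cost r r.
Proof. by move=> hp hq; rewrite /kuhn_cost; repeat (apply: leq_add || apply: leq_mul). Qed.

Lemma kuhn_cost_cubic q : 0 < q -> 1 + kuhn_cost q q <= 14 * q ^ 3.
Proof. by rewrite /kuhn_cost => hq; nia. Qed.

Section MatchingDuality.
Variables (Name : Type) (thes : rel Name) (S1 S2 : schema Name).
Local Notation X1 := (xcomp S1).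
Local Notation X2 := (xcomp S2).

Lemma matching_le_cover (P : {set X1}) (Q : {set X2}) M (CL : {set X1}) (CR : {set X2}) :
  is_matching thes P Q M ->
  (forall a b, a \in P -> b \in Q -> thes (cname a) (cname b) -> (a \in CL) || (b \in CR)) ->
  #|M| <= #|CL| + #|CR|.
Proof.
move=> /andP [/forallP edgeM /forallP injM] cov.
have eqM e e' : e \in M -> e' \in M -> (e.1 == e'.1) || (e.2 == e'.2) -> e = e'.
  move=> he he' h; move: (injM e); rewrite he /= => /forall_inP /(_ e' he') /implyP.
  by move=> /(_ h) /eqP.
pose B := [set e : X1 * X2 | e.1 \in CL].
rewrite -(cardsID B M); apply: leq_add.
- have inj1 : {in M :&: B &, injective fst}.
    by move=> e e' /setIP [he _] /setIP [he' _] h; apply: eqM => //; rewrite h eqxx.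
  rewrite -(card_in_imset inj1); apply/subset_leq_card/subsetP => a.
  by case/imsetP => e /setIP [_]; rewrite inE => ? ->.
- have inj2 : {in M :\: B &, injective snd}.
    by move=> e e' /setDP [he _] /setDP [he' _] h; apply: eqM => //; rewrite h eqxx orbT.
  rewrite -(card_in_imset inj2); apply/subset_leq_card/subsetP => b.
  case/imsetP => e /setDP [he]; rewrite inE => nB ->.
  move: (edgeM e); rewrite he /= => /and3P [ha hb hab].
  by have := cov _ _ ha hb hab; rewrite (negbTE nB).
Qed.

Lemma max_matching_size_le_cover (P : {set X1}) (Q : {set X2}) (CL : {set X1}) (CR : {set X2}) :
  (forall a b, a \in P -> b \in Q -> thes (cname a) (cname b) -> (a \in CL) || (b \in CR)) ->
  max_matching_size thes P Q <= #|CL| + #|CR|.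
Proof. by move=> cov; apply/bigmax_leqP => M /matching_le_cover; apply. Qed.

End MatchingDuality.

Section Kuhn.
Variables (Name : Type) (thes : rel Name) (S1 S2 : schema Name)
  (pl : seq (xcomp S1)) (ql : seq (xcomp S2)).
Hypotheses (upl : uniq pl) (uql : uniq ql).
Local Notation X1 := (xcomp S1).
Local Notation X2 := (xcomp S2).
Local Notation nm1 := (@cname _ S1).
Local Notation nm2 := (@cname _ S2).
Local Notation edge := (bg_edge thes nm1 nm2 pl ql).
Local Notation nP := (size pl).
Local Notation nQ := (size ql).

Lemma bg_edge_index a b :
  a \in pl -> b \in ql -> edge (index a pl) (index b ql) = thes (nm1 a) (nm2 b).
Proof. by move=> ha hb; rewrite /bg_edge !onth_index. Qed.

Definition matched_count (mt : seq (option nat)) : nat := count (fun o : option nat => o) mt.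

Definition covers_upto k (CL : {set X1}) (CR : {set X2}) : Prop :=
  forall a b, a \in pl -> index a pl < k -> b \in ql -> thes (nm1 a) (nm2 b) ->
    (a \in CL) || (b \in CR).

(* [mt] maps right positions to left positions: a matching of the first [k]
   left nodes, together with a vertex cover of their edges that is no larger. *)
Definition kuhn_inv k (mt : seq (option nat)) : Prop :=
  [/\ size mt = nQ,
      forall j x, nth None mt j = Some x -> edge x j /\ x < k,
      forall x, count (pred1 (Some x)) mt <= 1
    & exists CL CR, covers_upto k CL CR /\ #|CL| + #|CR| <= matched_count mt].

Lemma kuhn_inv0 : kuhn_inv 0 (nseq nQ None).
Proof.
split.
- by rewrite size_nseq.
- by move=> j x; rewrite nth_nseq; case: ifP.
- by move=> x; rewrite count_nseq /= mul0n.
- by exists set0, set0; split=> [a b _|]; rewrite ?ltn0 ?cards0.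
Qed.

Lemma kuhn_inv_augment k vis mt mt' :
  k < nP -> kuhn_inv k mt -> augments thes nm1 nm2 pl ql k vis mt mt' -> kuhn_inv k.+1 mt'.
Proof.
move=> hk [sm vm im [CL [CR [cov ccard]]]] [sz cs cn ev _].
have a0 : X1 by move: hk; case: (pl) => // a _ _; exact: a.
have old_lt x : Some x \in mt -> x < k by move=> /(nth_index None) /vm [].
have new_lt x : Some x \in mt' -> x < k.+1.
  rewrite -has_pred1 has_count cs; case: (x =P k) => [-> //|_].
  by rewrite addn0 -has_count has_pred1 => /old_lt /ltnW.
split.
- by rewrite sz.
- move=> j x hj; split; last by apply: new_lt; exact: (nth_Some_mem hj).2.
  by case: (ev _ _ hj) => // /vm [].
- move=> x; rewrite cs; case: (x =P k) => [->|_]; last by rewrite addn0.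
  suff /count_memPn -> : Some k \notin mt by [].
  by apply/negP => /old_lt; rewrite ltnn.
- exists (nth a0 pl k |: CL), CR; split.
    move=> a b ha; rewrite ltnS leq_eqVlt => /orP [/eqP ia | ia] hb hab.
      by rewrite -ia nth_index // setU11.
    by rewrite in_setU1; case/orP: (cov a b ha ia hb hab) => ->; rewrite ?orbT.
  have : matched_count mt' = (matched_count mt).+1.
    move: (count_Some_add_None mt) (count_Some_add_None mt'); rewrite sz -cn /matched_count; lia.
  by rewrite cardsU1 => ->; case: (_ \notin _); lia.
Qed.

Section BlockedCover.
Variables (k : nat) (mt : seq (option nat)) (vis : seq bool) (CL : {set X1}) (CR : {set X2}).
Hypotheses (sm : size mt = nQ) (svis : size vis = nQ)
  (vm : forall j x, nth None mt j = Some x -> edge x j /\ x < k)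
  (im : forall x, count (pred1 (Some x)) mt <= 1)
  (cov : covers_upto k CL CR) (hk : k < nP)
  (blk : blocked thes nm1 nm2 pl ql 0 k (nseq nQ false) mt vis).

Definition visited_right : {set X2} := [set b | (b \in ql) && nth true vis (index b ql)].

Definition visited_partners : {set X1} :=
  [set a | [exists b in visited_right, nth None mt (index b ql) == Some (index a pl)]].

Lemma visited_matched b : b \in visited_right ->
  exists2 i, nth None mt (index b ql) = Some i &
    forall j, edge i j -> nth true vis j.
Proof.
rewrite inE => /andP [hb vb]; apply: (proj2 blk) => //.
by rewrite nth_nseq index_mem hb.
Qed.

(* Koenig's exchange: the partners of visited right nodes leave the cover and
   the visited right nodes enter it. *)
Lemma covers_blocked : covers_upto k.+1 (CL :\: visited_partners) (CR :|: visited_right).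
Proof.
move=> a b ha hi hb hab; rewrite in_setD in_setU.
suff [[ia /negbTE ->]|->] : (index a pl < k /\ a \notin visited_partners) \/ b \in visited_right.
  - by case/orP: (cov ha ia hb hab) => ->; rewrite ?orbT.
  - by rewrite !orbT.
have eab : edge (index a pl) (index b ql) by rewrite bg_edge_index.
case pa: (a \in visited_partners).
  right; move: pa; rewrite inE => /exists_inP [b' vb' /eqP mb'].
  have [i' mi' visi'] := visited_matched vb'.
  by rewrite inE hb /=; apply: visi'; move: mi'; rewrite mb' => -[<-].
move: hi; rewrite ltnS leq_eqVlt => /orP [/eqP ia | ia]; last by left.
by right; rewrite inE hb /=; apply: (proj1 blk) => //; rewrite -ia.
Qed.

Lemma card_blocked_cover :
  #|CL :\: visited_partners| + #|CR :|: visited_right| <= #|CL| + #|CR|.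
Proof.
have a0 : X1 by move: hk; case: (pl) => // a _ _; exact: a.
pose f b := nth a0 pl (odflt 0 (nth None mt (index b ql))).
have f_matched b : b \in visited_right :\: CR ->
    nth None mt (index b ql) = Some (index (f b) pl) /\ f b \in CL :&: visited_partners.
  rewrite in_setD => /andP [nbR vb].
  have [i' mi' _] := visited_matched vb.
  have [ei' ik] := vm mi'.
  have ia : index (f b) pl = i' by rewrite /f mi' index_uniq // (bg_edge_ltn ei').1.
  have hfb : f b \in pl by rewrite /f mi' mem_nth // (bg_edge_ltn ei').1.
  have hb : b \in ql by move: vb; rewrite inE => /andP [].
  split; first by rewrite ia.
  rewrite !inE; apply/andP; split; last by apply/exists_inP; exists b; rewrite // mi' ia.
  have := cov hfb _ hb; rewrite -bg_edge_index // ia ei' (negbTE nbR) orbF.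
  by apply.
have f_inj : {in visited_right :\: CR &, injective f}.
  move=> b1 b2 /f_matched [m1 _] /f_matched [m2 _] e12; rewrite e12 in m1.
  have hb1 : b1 \in ql by rewrite -index_mem -sm (nth_Some_mem m1).1.
  have hb2 : b2 \in ql by rewrite -index_mem -sm (nth_Some_mem m2).1.
  have := nth_count_le1_inj (im _) _ _ m1 m2; rewrite sm !index_mem => /(_ hb1 hb2) e.
  by rewrite -(nth_index b1 hb1) e nth_index.
have card_new : #|visited_right :\: CR| <= #|CL :&: visited_partners|.
  rewrite -(card_in_imset f_inj); apply/subset_leq_card/subsetP => a /imsetP [b hb ->].
  exact: (f_matched b hb).2.
have := subset_leq_card (subsetIl CL visited_partners).
rewrite cardsD cardsU -(cardsID CR visited_right) (setIC visited_right); lia.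
Qed.

Lemma kuhn_inv_blocked : #|CL| + #|CR| <= matched_count mt -> kuhn_inv k.+1 mt.
Proof.
move=> ccard; split=> //; first by move=> j x /vm [? /ltnW].
exists (CL :\: visited_partners), (CR :|: visited_right).
by split; [exact: covers_blocked | exact: leq_trans card_blocked_cover ccard].
Qed.

End BlockedCover.

Lemma kuhn_step k mt b vis mt' c : k < nP -> kuhn_inv k mt ->
  tryC thes nm1 nm2 pl ql nQ.+1 k (nseq nQ false) mt = ((b, vis, mt'), c) ->
  kuhn_inv k.+1 mt' /\ c <= (2 * nQ + 2) * (nQ + 1).
Proof.
move=> hk inv Et; have [sm vm im [CL [CR [cov ccard]]]] := inv.
have nv0 : nvisited (nseq nQ false) = 0 by rewrite /nvisited count_nseq mul0n.
have fuel : nQ < nvisited (nseq nQ false) + nQ.+1 by rewrite nv0.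
have [[svis _ _] cost res] := tryC_spec (size_nseq _ _) sm fuel Et.
split; last first.
  have := count_size id vis; rewrite svis size_nseq -/(nvisited vis).
  by move: cost; rewrite nv0; nia.
case: b res {Et} => [aug | [-> blk]]; first exact: kuhn_inv_augment aug.
by apply: (kuhn_inv_blocked sm _ vm im cov hk blk ccard); rewrite svis size_nseq.
Qed.

Lemma kuhn_loop_S r mt : kuhn_loop thes nm1 nm2 pl ql r.+1 mt =
  let: (s, n) := tryC thes nm1 nm2 pl ql nQ.+1 (nP - r.+1) (nseq nQ false) mt in
  let: (mt', k) := kuhn_loop thes nm1 nm2 pl ql r s.2 in (mt', 1 + (nQ + (n + k))).
Proof.
rewrite -[LHS]/(DO _ <- tick; DO _ <- ticks nQ;
  DO s <- tryC thes nm1 nm2 pl ql nQ.+1 (nP - r.+1) (nseq nQ false) mt;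
  kuhn_loop thes nm1 nm2 pl ql r s.2).
case: (tryC thes nm1 nm2 pl ql nQ.+1 (nP - r.+1) (nseq nQ false) mt) => s n /=.
by case: (kuhn_loop thes nm1 nm2 pl ql r s.2).
Qed.

Lemma kuhn_loop_spec r mt : r <= nP -> kuhn_inv (nP - r) mt ->
  kuhn_inv nP (kuhn_loop thes nm1 nm2 pl ql r mt).1 /\
  (kuhn_loop thes nm1 nm2 pl ql r mt).2 <= r * (1 + nQ + (2 * nQ + 2) * (nQ + 1)).
Proof.
elim: r mt => [|r IH] mt hr inv; first by rewrite subn0 in inv.
rewrite kuhn_loop_S.
case Et: (tryC thes nm1 nm2 pl ql nQ.+1 (nP - r.+1) (nseq nQ false) mt) => [[[b vis] mt'] c].
have hk : nP - r.+1 < nP by lia.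
have [inv' cost] := kuhn_step hk inv Et.
have inv'r : kuhn_inv (nP - r) mt' by rewrite (_ : nP - r = (nP - r.+1).+1) //; lia.
have [inv'' cost'] := IH mt' (ltnW hr) inv'r.
move: inv'' cost'; case: (kuhn_loop thes nm1 nm2 pl ql r mt') => mt'' k /= inv'' cost'.
by split=> //; rewrite mulSn; lia.
Qed.

Definition matching_of (mt : seq (option nat)) : {set X1 * X2} :=
  [set e | [&& e.1 \in pl, e.2 \in ql & nth None mt (index e.2 ql) == Some (index e.1 pl)]].

Lemma is_matching_of k mt (P : {set X1}) (Q : {set X2}) :
  P =i pl -> Q =i ql -> kuhn_inv k mt -> is_matching thes P Q (matching_of mt).
Proof.
move=> hP hQ [sm vm im _]; apply/andP; split.
  apply/forall_inP => e; rewrite inE => /and3P [h1 h2 /eqP h3].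
  by rewrite hP hQ h1 h2 -bg_edge_index // (vm _ _ h3).1.
apply/forall_inP => e; rewrite inE => /and3P [h1 h2 /eqP h3].
apply/forall_inP => e'; rewrite inE => /and3P [h1' h2' /eqP h3'].
apply/implyP => /orP [/eqP e1 | /eqP e2].
  rewrite e1 in h3.
  have := nth_count_le1_inj (im _) _ _ h3 h3'; rewrite sm !index_mem => /(_ h2 h2') e2.
  have {}e2 : e.2 = e'.2 by rewrite -(nth_index e.2 h2) e2 nth_index.
  by case: e e' e1 e2 {h1 h2 h3 h1' h2' h3'} => [? ?] [? ?] /= -> ->.
rewrite e2 h3' in h3; case: h3 => h3.
have e1 : e.1 = e'.1 by rewrite -(nth_index e.1 h1) -h3 nth_index.
by case: e e' e1 e2 {h1 h2 h1' h2' h3 h3'} => [? ?] [? ?] /= -> ->.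
Qed.

Lemma matched_count_le_card_matching k mt : kuhn_inv k mt -> matched_count mt <= #|matching_of mt|.
Proof.
move=> [sm vm _ _]; apply: leq_trans (leq_imset_card snd _).
have -> : matched_count mt = #|[set b | (b \in ql) && (nth None mt (index b ql) : bool)]|.
  rewrite card_set_mem_filter // /matched_count -{1}(mkseq_nth None mt) /mkseq sm.
  by rewrite -map_index_uniq // -map_comp count_map.
apply/subset_leq_card/subsetP => b; rewrite inE => /andP [hb].
case E: (nth None mt (index b ql)) => [i|] // _.
have il := (bg_edge_ltn (vm _ _ E).1).1.
have a0 : X1 by move: il; case: (pl) => // a _ _; exact: a.
apply/imsetP; exists (nth a0 pl i, b) => //.
by rewrite inE /= mem_nth // hb index_uniq // E eqxx.
Qed.

Lemma kuhn_inv_max mt (P : {set X1}) (Q : {set X2}) :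
  P =i pl -> Q =i ql -> kuhn_inv nP mt -> matched_count mt = max_matching_size thes P Q.
Proof.
move=> hP hQ inv; apply/eqP; rewrite eqn_leq; apply/andP; split.
  apply: leq_trans (matched_count_le_card_matching inv) _.
  exact: leq_bigmax_cond (is_matching_of hP hQ inv).
have [_ _ _ [CL [CR [cov ccard]]]] := inv; apply: leq_trans ccard.
apply: max_matching_size_le_cover => a b; rewrite hP hQ => ha hb.
by apply: cov; rewrite ?index_mem.
Qed.

Lemma similarC_correct x1 x2 v :
  pl =i neighborhood x1 v -> ql =i neighborhood x2 v ->
  (similarC thes nm1 nm2 pl ql).1 = similar_at thes x1 x2 v /\
  (similarC thes nm1 nm2 pl ql).2 <= kuhn_cost nP nQ.
Proof.
move=> hp hq.
have inv0 : kuhn_inv (nP - nP) (nseq nQ None) by rewrite subnn; exact: kuhn_inv0.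
have [inv cost] := kuhn_loop_spec (leqnn _) inv0.
have := kuhn_inv_max (P := neighborhood x1 v) (Q := neighborhood x2 v)
  (fun a => esym (hp a)) (fun b => esym (hq b)) inv.
move: inv cost; rewrite /similarC /kuhnC /=.
case: (kuhn_loop thes nm1 nm2 pl ql nP (nseq nQ None)) => mt n /= _ cost hmax.
split; last by rewrite /kuhn_cost; lia.
have cP : #|neighborhood x1 v| = nP by rewrite -(card_uniqP upl); apply: eq_card.
have cQ : #|neighborhood x2 v| = nQ by rewrite -(card_uniqP uql); apply: eq_card.
rewrite /similar_at /phiBG cP cQ -hmax half_ltr_ratio //.
by have := mem_neighborhood_self x1 v; rewrite -hp; case: (pl) => // ? ? _; rewrite addSn.
Qed.

End Kuhn.

Lemma synonymous_all (Name : Type) (thes : rel Name) (S1 S2 : schema Name)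
    (E1 : xcomp S1) (E2 : xcomp S2) u :
  synonymous thes E1 E2 u = all (similar_at thes E1 E2) (iota 0 u.+1).
Proof.
apply/forallP/allP => [h v | h v]; last by apply: h; rewrite mem_iota ltn_ord.
by rewrite mem_iota add0n => hv; exact: (h (Ordinal hv)).
Qed.

Section Levels.
Variables (Name : Type) (thes : rel Name) (S1 S2 : schema Name) (u : nat)
  (nb1 : xcomp S1 -> nat -> seq (xcomp S1)) (nb2 : xcomp S2 -> nat -> seq (xcomp S2))
  (E1 : xcomp S1) (E2 : xcomp S2) (q : nat).
Hypotheses
  (nb1_ok : forall v, v <= u -> uniq (nb1 E1 v) /\ nb1 E1 v =i neighborhood E1 v)
  (nb2_ok : forall v, v <= u -> uniq (nb2 E2 v) /\ nb2 E2 v =i neighborhood E2 v)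
  (nb_size : forall v, v <= u -> size (nb1 E1 v) <= q /\ size (nb2 E2 v) <= q).
Local Notation nm1 := (@cname _ S1).
Local Notation nm2 := (@cname _ S2).
Local Notation levelsC := (levelsC thes nm1 nm2 u nb1 nb2 E1 E2).

Lemma levelsC_S r : levelsC r.+1 =
  let: (b, n) := similarC thes nm1 nm2 (nb1 E1 (u.+1 - r.+1)) (nb2 E2 (u.+1 - r.+1)) in
  let: (b', n') := levelsC r in (b && b', 1 + (n + (n' + 0))).
Proof.
rewrite -[LHS]/(DO _ <- tick;
  DO b <- similarC thes nm1 nm2 (nb1 E1 (u.+1 - r.+1)) (nb2 E2 (u.+1 - r.+1));
  DO b' <- levelsC r; retC (b && b')).
case: (similarC thes nm1 nm2 (nb1 E1 (u.+1 - r.+1)) (nb2 E2 (u.+1 - r.+1))) => b n /=.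
by case: (levelsC r).
Qed.

Lemma levelsC_spec r : r <= u.+1 ->
  (levelsC r).1 = all (similar_at thes E1 E2) (iota (u.+1 - r) r) /\
  (levelsC r).2 <= r * (1 + kuhn_cost q q).
Proof.
elim: r => [|r IH] hr //; rewrite levelsC_S.
have hv : u.+1 - r.+1 <= u by lia.
have [u1 m1] := nb1_ok hv; have [u2 m2] := nb2_ok hv; have [q1 q2] := nb_size hv.
have [val cost] := similarC_correct thes u1 u2 m1 m2.
have [IH1 IH2] := IH (ltnW hr).
move: val cost IH1 IH2.
case: (similarC thes nm1 nm2 (nb1 E1 (u.+1 - r.+1)) (nb2 E2 (u.+1 - r.+1))) => b n /= -> cost.
case: (levelsC r) => b' n' /= -> cost'.
split; first by rewrite (_ : (u.+1 - r.+1).+1 = u.+1 - r) //; lia.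
by have := kuhn_cost_le q1 q2; rewrite mulSn; lia.
Qed.

Lemma synonymousC_spec :
  (synonymousC thes nm1 nm2 u nb1 nb2 E1 E2).1 = synonymous thes E1 E2 u /\
  (synonymousC thes nm1 nm2 u nb1 nb2 E1 E2).2 <= u.+1 * (1 + kuhn_cost q q).
Proof. by have [-> ->] := levelsC_spec (leqnn u.+1); rewrite subnn synonymous_all. Qed.

End Levels.

Lemma table_cost_le n1 n2 m q u : n1 <= m -> n2 <= m -> 0 < q ->
  n1 * (1 + n2 * (1 + u.+1 * (1 + kuhn_cost q q))) <= 16 * ((u + 1) * q ^ 3 * m ^ 2).
Proof.
move=> h1 h2 hq; have hK := kuhn_cost_cubic hq.
set Z := (u + 1) * q ^ 3.
have hZ : 0 < Z by rewrite muln_gt0 addn1 expn_gt0 hq.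
have hKZ : u.+1 * (1 + kuhn_cost q q) <= 14 * Z by rewrite /Z addn1 mulnCA leq_mul2l hK orbT.
have hm : m <= m ^ 2 by rewrite expnS expn1; case: m {h1 h2} => // m; rewrite mulSn leq_addr.
have hmZ : m ^ 2 <= Z * m ^ 2 by rewrite leq_pmull.
apply: (@leq_trans (m * (1 + m * (1 + 14 * Z)))); first by rewrite leq_mul // leq_add2l leq_mul // leq_add2l.
rewrite (_ : m ^ 2 = m * m) in hm hmZ *; [nia | by rewrite expnS expn1 ..].
Qed.

Section ComplexityParameters.
Variables (Name : Type) (S1 S2 : schema Name) (u : nat).

Lemma size_le_q_param1 (x : xcomp S1) v s :
  v <= u -> uniq s -> s =i neighborhood x v -> size s <= q_param S1 S2 u.
Proof.
move=> hv us hs; rewrite -(card_uniqP us) (eq_card hs) /q_param.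
apply: leq_trans (leq_maxl _ _); apply: leq_trans (leq_bigmax x).
exact: (leq_bigmax (F := fun v : 'I_u.+1 => #|neighborhood x v|) (Ordinal (hv : v < u.+1))).
Qed.

Lemma size_le_q_param2 (x : xcomp S2) v s :
  v <= u -> uniq s -> s =i neighborhood x v -> size s <= q_param S1 S2 u.
Proof.
move=> hv us hs; rewrite -(card_uniqP us) (eq_card hs) /q_param.
apply: leq_trans (leq_maxr _ _); apply: leq_trans (leq_bigmax x).
exact: (leq_bigmax (F := fun v : 'I_u.+1 => #|neighborhood x v|) (Ordinal (hv : v < u.+1))).
Qed.

Lemma size_le_m_param1 (cl : seq (xcomp S1)) :
  uniq cl -> (forall x, (x \in cl) = complex_elem x) -> size cl <= m_param S1 S2.
Proof.
move=> ucl hcl; rewrite -(card_uniqP ucl) /m_param; apply: leq_trans (leq_maxl _ _).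
by apply/subset_leq_card/subsetP => x; rewrite hcl inE.
Qed.

Lemma size_le_m_param2 (cl : seq (xcomp S2)) :
  uniq cl -> (forall x, (x \in cl) = complex_elem x) -> size cl <= m_param S1 S2.
Proof.
move=> ucl hcl; rewrite -(card_uniqP ucl) /m_param; apply: leq_trans (leq_maxr _ _).
by apply/subset_leq_card/subsetP => x; rewrite hcl inE.
Qed.

End ComplexityParameters.

Theorem mainTheorem5 :
  exists c : nat,
  forall (Name : Type) (thes : rel Name), symmetric thes ->
  forall (S1 S2 : schema Name) (u : nat)
         (cl1 : seq (xcomp S1)) (cl2 : seq (xcomp S2))
         (nb1 : xcomp S1 -> nat -> seq (xcomp S1))
         (nb2 : xcomp S2 -> nat -> seq (xcomp S2)),
  (* the complex elements of S1 and S2 are available as lists *)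
  uniq cl1 -> (forall x, (x \in cl1) = complex_elem x) ->
  uniq cl2 -> (forall x, (x \in cl2) = complex_elem x) ->
  (* the neighborhoods are available as lists *)
  (forall x v, complex_elem x -> v <= u ->
     uniq (nb1 x v) /\ (forall y, (y \in nb1 x v) = (y \in neighborhood x v))) ->
  (forall x v, complex_elem x -> v <= u ->
     uniq (nb2 x v) /\ (forall y, (y \in nb2 x v) = (y \in neighborhood x v))) ->
  let run := all_synonymiesC thes (@cname _ S1) (@cname _ S2) u nb1 nb2 cl1 cl2 in
  run.1 = [seq [seq ((E1, E2), synonymous thes E1 E2 u) | E2 <- cl2] | E1 <- cl1]
  /\ run.2 <= c * ((u + 1) * q_param S1 S2 u ^ 3 * m_param S1 S2 ^ 2).
Proof.
exists 16 => Name thes _ S1 S2 u cl1 cl2 nb1 nb2 uc1 mc1 uc2 mc2 hn1 hn2 run.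
set q := q_param S1 S2 u.
have syn E1 E2 : E1 \in cl1 -> E2 \in cl2 ->
    (synonymousC thes (@cname _ S1) (@cname _ S2) u nb1 nb2 E1 E2).1 = synonymous thes E1 E2 u /\
    (synonymousC thes (@cname _ S1) (@cname _ S2) u nb1 nb2 E1 E2).2 <= u.+1 * (1 + kuhn_cost q q).
  rewrite mc1 mc2 => h1 h2; apply: synonymousC_spec => v hv; [exact: hn1 | exact: hn2 |].
  have [un1 mn1] := hn1 E1 v h1 hv; have [un2 mn2] := hn2 E2 v h2 hv.
  by split; [exact: size_le_q_param1 hv un1 mn1 | exact: size_le_q_param2 hv un2 mn2].
rewrite /run /all_synonymiesC mapC_val mapC_cost; split.
  apply/eq_in_map => E1 h1; rewrite mapC_val; apply/eq_in_map => E2 h2.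
  by rewrite bindC_retC (syn _ _ h1 h2).1.
case: cl1 uc1 mc1 syn {run} => [|E0 cl1] uc1 mc1 syn //.
have hq : 0 < q.
  have hE0 : complex_elem E0 by rewrite -mc1 mem_head.
  have [un mn] := hn1 E0 0 hE0 (leq0n u).
  apply: leq_trans (size_le_q_param1 S2 (leq0n u) un mn).
  by have := mem_neighborhood_self E0 0; rewrite -mn; case: (nb1 E0 0).
apply: leq_trans (table_cost_le u (size_le_m_param1 S2 uc1 mc1) (size_le_m_param2 S1 uc2 mc2) hq).
apply: sumn_map_le => E1 h1; rewrite leq_add2l mapC_cost.
apply: sumn_map_le => E2 h2; rewrite leq_add2l bindC_retC addn0.
exact: (syn _ _ h1 h2).2.
Qed.
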